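(* Let $k,n\in\mathbb N$. There do not exist uniformly bounded families $\mathcal V_1,\dots,\mathcal V_n$ of subsets of $(k\mathbb Z)^n$, each $2k$-disjoint, such that $\bigcup_{i=1}^n\mathcal V_i$ covers $(k\mathbb Z)^n$.
   Context: $k\mathbb Z=\{kl:l\in\mathbb Z\}$, and $(k\mathbb Z)^n\subset\mathbb Z^n$ carries the sup-metric $d((x_1,\dots,x_n),(y_1,\dots,y_n))=\max_i|x_i-y_i|$. A family $\mathcal A$ of subsets is uniformly bounded if there is $C>0$ with $\operatorname{diam}A\le C$ for all $A\in\mathcal A$; it is $r$-disjoint if $d(A_1,A_2)\ge r$ for all distinct $A_1,A_2\in\mathcal A$. *)

From mathcomp Require Import all_boot all_order all_algebra.
Set Implicit Arguments. Unset Strict Implicit. Unset Printing Implicit Defensive.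
Import Order.TTheory GRing.Theory Num.Theory.

Definition point (n : nat) := 'I_n -> int.

Definition supdist (n : nat) (x y : point n) : nat :=
  \max_(i < n) `|x i - y i|%N.

Definition lattice (k n : nat) (x : point n) : Prop :=
  forall i : 'I_n, (k%:Z %| x i)%Z.

Definition setfam (n : nat) := (point n -> Prop) -> Prop.

Definition unif_bounded (n : nat) (V : setfam n) : Prop :=
  exists C : nat, forall A, V A -> forall x y, A x -> A y -> supdist x y <= C.

(* r-disjoint: d(A1,A2) >= r for distinct members A1, A2
   (d(A1,A2) = inf of distances, hence >= r iff all pointwise distances are) *)
Definition r_disjoint (n : nat) (r : nat) (V : setfam n) : Prop :=
  forall A1 A2, V A1 -> V A2 -> A1 <> A2 ->
    forall x y, A1 x -> A2 y -> r <= supdist x y.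

From mathcomp Require Import all_boot all_algebra fingroup perm zify.
From Stdlib Require Import FunctionalExtensionality Classical ClassicalEpsilon.
From Stdlib Require Import ClassicalDescription.
Set Implicit Arguments. Unset Strict Implicit. Unset Printing Implicit Defensive.

(* Suppose [V_0, ..., V_(n-1)], bounded by [C], cover [(kZ)^n].  Colour each point [u]
   of the grid [{0, ..., C+2}^n] by a family containing [k u], except on the faces
   [u_i = 0], where the colour is forced to be the last vanishing coordinate.  Label
   [u] by [i+1] when it is joined to the face [u_i = 0] by a chain of adjacent points
   of colour [i], and by [0] otherwise.  Two adjacent points of colour [i] off that
   face lie in the same set of [V_i], since their distance [k] is below [2k]; so such
   a chain stays in one set of diameter [<= C] and never reaches the face
   [u_i = C+2].  Hence the labelling satisfies Sperner's boundary conditions, and the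
   door-to-door parity argument on Kuhn's triangulation of the cube yields a simplex
   carrying every label [0, ..., n].  But a vertex labelled [0] is adjacent to the
   vertex labelled by its colour plus one, so it would be joined as well. *)

Lemma odd_sum_odd (I : finType) (F : I -> nat) :
  odd (\sum_i F i) = odd (\sum_i odd (F i)).
Proof.
apply: (big_ind2 (fun a b => odd a = odd b)) => // [a1 b1 a2 b2 e1 e2|i _].
  by rewrite !oddD e1 e2.
by case: (odd (F i)).
Qed.

Lemma card_set_sum (T : finType) (P : pred T) : #|[set t | P t]| = \sum_t P t.
Proof. by rewrite -sum1dep_card big_mkcond; apply: eq_bigr => t _; case: (P t). Qed.

Lemma odd_card_involution (T : finType) (f : T -> T) (A : {set T}) :
  {in A, forall t, f t \in A} -> {in A, involutive f} ->
  odd #|A| = odd #|[set t in A | f t == t]|.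
Proof.
have [N] := ubnP #|A|; elim: N A => // N IH A ltAN fA fK.
case: (pickP [pred t in A | f t != t]) => [a /andP[aA fa] | nofix]; last first.
  suff -> : [set t in A | f t == t] = A by [].
  apply/setP => t; rewrite !inE; case tA: (t \in A) => //=.
  by move: (nofix t); rewrite /= tA => /negbFE.
have faA := fA a aA.
set B := A :\ a :\ f a.
have cardA : #|A| = #|B|.+2.
  by rewrite (cardsD1 a A) aA (cardsD1 (f a) (A :\ a)) !inE fa faA.
have inB t : t \in B = [&& t != f a, t != a & t \in A] by rewrite !inE.
have fixB : [set t in A | f t == t] = [set t in B | f t == t].
  apply/setP => t; rewrite !inE; case ft: (f t == t); rewrite ?andbF //=.
  case tA: (t \in A); rewrite ?andbF //=.
  rewrite !andbT; apply/esym/andP; split; apply/eqP => e.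
    have : f (f a) = f a by rewrite -e (eqP ft).
    by rewrite fK // => /eqP; rewrite eq_sym (negbTE fa).
  by move: ft; rewrite e (negbTE fa).
rewrite cardA fixB /= (IH B) ?negbK //; first by move: ltAN; rewrite cardA; lia.
  move=> t; rewrite !inB => /and3P[tfa ta tA]; rewrite fA // andbT.
  apply/andP; split.
    by apply: contra_neq ta => /(congr1 f); rewrite !fK.
  by apply: contra_neq tfa => <-; rewrite fK.
by move=> t; rewrite inB => /and3P[_ _ /fK].
Qed.

Lemma decreasing_ordE n (g : 'I_n -> 'I_n) :
  (forall c i : 'I_n, c < i -> g i < g c) -> g =1 @rev_ord n.
Proof.
move=> decr.
have ge d (c : 'I_n) : c + d = n.-1 -> d <= g c.
  elim: d c => [//|d IH] c cd.
  have lt : c.+1 < n by lia.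
  have := IH (Ordinal lt); rewrite /= addSnnS => /(_ cd).
  by have := decr c (Ordinal lt) (ltnSn c); lia.
have le d (c : 'I_n) : c = d :> nat -> g c + c <= n.-1.
  elim: d c => [|d IH] c cd; first by have := ltn_ord (g c); lia.
  have lt : d < n by have := ltn_ord c; lia.
  have := IH (Ordinal lt) erefl.
  by have := decr (Ordinal lt) c; rewrite /= cd ltnSn => /(_ isT); lia.
move=> c; apply: ord_inj; have cn := ltn_ord c.
have := ge (n.-1 - c) c ltac:(lia); have := le c c erefl.
have -> : rev_ord c = n - c.+1 :> nat by [].
lia.
Qed.

Definition last_zero n (v : 'I_n -> nat) (c : 'I_n) :=
  v c = 0 /\ forall i : 'I_n, c < i -> v i != 0.

Lemma last_zero_exists n (v : 'I_n -> nat) i : v i = 0 -> exists c, last_zero v c.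
Proof.
move=> vi; have [|c /eqP vc cmax] := @arg_maxnP _ i (fun j => v j == 0) (@nat_of_ord n).
  exact/eqP.
exists c; split => // j cj; apply/eqP => vj.
by have := cmax j (introT eqP vj); lia.
Qed.

Lemma last_zero_bigmax n (v : 'I_n -> nat) c :
  last_zero v c -> \max_(j < n | v j == 0) j = c.
Proof.
move=> [vc cmax]; apply/eqP; rewrite eqn_leq; apply/andP; split.
  apply/bigmax_leqP => j /eqP vj; rewrite leqNgt; apply/negP => cj.
  by move: (cmax j cj); rewrite vj.
by apply: (@leq_bigmax_cond _ _ val); rewrite vc.
Qed.

Section FacetLabels.
Variables (n : nat) (g : 'I_n.+1 -> nat).

Definition facet_complete (j : 'I_n.+1) : bool :=
  [forall c : 'I_n, [exists j', (j' != j) && (g j' == c.+1)]].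

Definition complete_labelling : bool := [forall c : 'I_n.+1, [exists j, g j == c]].

Lemma facet_complete_labels j0 : facet_complete j0 ->
  exists w : 'I_n -> 'I_n.+1, [/\ forall c, w c != j0, forall c, g (w c) = c.+1
    & forall j, j != j0 -> exists c, j = w c].
Proof.
move=> /forallP j0D.
pose w (c : 'I_n) := odflt j0 [pick j | (j != j0) && (g j == c.+1)].
have wP c : w c != j0 /\ g (w c) = c.+1.
  rewrite /w; case: pickP => [j /andP[? /eqP] //|none].
  by have /existsP[j] := j0D c; rewrite none.
have w_inj : injective w.
  by move=> c c' e; apply: ord_inj; have := (wP c).2; rewrite e (wP c').2 => -[].
have wT : j0 |: [set w c | c in 'I_n] = setT.
  apply/eqP; rewrite eqEcard subsetT cardsT card_ord cardsU1 card_imset //.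
  by rewrite card_ord; case: imsetP => //= -[c _ e]; have := (wP c).1; rewrite -e eqxx.
exists w; split=> [c|c|j nj]; [exact: (wP c).1 | exact: (wP c).2 |].
have : j \in j0 |: [set w c | c in 'I_n] by rewrite wT inE.
by rewrite in_setU1 (negbTE nj) => /imsetP[c _ ->]; exists c.
Qed.

Hypothesis g_le : forall j, g j <= n.

Lemma odd_card_facet_complete :
  odd #|[set j | facet_complete j]| = complete_labelling.
Proof.
set D := [set j | _].
case: (set_0Vmem D) => [D0 | [j0 j0D]].
  rewrite D0 cards0; apply/esym/negbTE/forallP => full.
  have /existsP[j0 /eqP g0] := full ord0.
  suff : j0 \in D by rewrite D0 inE.
  rewrite inE; apply/forallP => c.
  have /existsP[j /eqP gj] := full (lift ord0 c).
  apply/existsP; exists j; rewrite gj eqxx andbT.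
  by apply/eqP => e; move: gj; rewrite e g0.
have := j0D; rewrite inE => /facet_complete_labels[w [wj0 gw onto]].
have w_of j (c : 'I_n) : j != j0 -> g j = c.+1 -> j = w c.
  by move=> /onto[c' ->]; rewrite gw => -[/ord_inj->].
case g0: (g j0) => [|c0].
  have -> : D = [set j0].
    apply/setP => j; rewrite in_set1; apply/idP/idP => [|/eqP -> //].
    rewrite inE => /forallP Dj; apply/contraT => /onto[c jw].
    have /existsP[j' /andP[nj' /eqP gj']] := Dj c.
    have nj'0 : j' != j0 by apply/eqP => e; move: gj'; rewrite e g0.
    by move: nj'; rewrite (w_of j' c nj'0 gj') jw eqxx.
  rewrite cards1; apply/esym/forallP => c; apply/existsP.
  case: (unliftP ord0 c) => [c' ->|->]; last by exists j0; rewrite g0.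
  by exists (w c'); rewrite gw.
have c0n : c0 < n by have := g_le j0; rewrite g0.
pose c0' := Ordinal c0n.
have -> : D = [set j0; w c0'].
  apply/setP => j; rewrite !inE; apply/idP/idP => [/forallP Dj|]; last first.
    case/orP=> /eqP ->; first by move: j0D; rewrite inE.
    apply/forallP => c; apply/existsP; have [->|nc] := eqVneq c c0'.
      by exists j0; rewrite g0 eq_sym wj0 /=.
    exists (w c); rewrite gw eqxx andbT; apply: contra_neq nc => /(congr1 g).
    by rewrite !gw => -[e]; exact: ord_inj.
  apply/contraT; rewrite negb_or => /andP[nj0 njw].
  have [c jw] := onto j nj0.
  have /existsP[j' /andP[nj' /eqP gj']] := Dj c.
  have [ej'|nj'0] := eqVneq j' j0; last first.
    by move: nj'; rewrite (w_of j' c nj'0 gj') jw eqxx.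
  move: gj'; rewrite ej' g0 => -[ec]; move: njw; rewrite jw.
  have -> : c = c0' by apply: ord_inj; rewrite -ec.
  by rewrite eqxx.
rewrite cards2 eq_sym wj0; apply/esym/negbTE/negP => /forallP/(_ ord0)/existsP[j /eqP gj].
have [c jw] : exists c, j = w c by apply: onto; apply/eqP => e; move: gj; rewrite e g0.
by move: gj; rewrite jw gw.
Qed.
End FacetLabels.

Definition adjacent n (u w : 'I_n -> nat) := forall j, u j <= w j + 1 /\ w j <= u j + 1.

Lemma ord_predE n (a : 'I_n) : ord_pred a = (if a == 0 :> nat then n.-1 else a.-1) :> nat.
Proof.
have an := ltn_ord a; rewrite /=; case: eqP => [->|a0].
  by rewrite add0n modn_small //; lia.
by rewrite -subn1 -addnBAC ?modnDr ?modn_small; lia.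
Qed.

Lemma ordSE n (a : 'I_n) : ordS a = (if a == n.-1 :> nat then 0 else a.+1) :> nat.
Proof.
have an := ltn_ord a; rewrite /=; case: eqP => [an1|an1].
  by rewrite an1 prednK ?modnn //; lia.
by rewrite modn_small; lia.
Qed.

Section KuhnTriangulation.
Variables (np m : nat).
Local Notation n := np.+1.
Local Notation base := {ffun 'I_n -> 'I_m.+1}.

(* The simplex [(x, s)] of Kuhn's triangulation of the grid [{0, ..., m+1}^n] has the
   vertices [x + e_(s 0) + ... + e_(s (l-1))], [l <= n]. *)
Definition kuhn_vertex (x : base) (s : {perm 'I_n}) (l : nat) : 'I_n -> nat :=
  fun i => x i + ((s^-1)%g i < l).

Lemma kuhn_vertex_le x s l i : kuhn_vertex x s l i <= m.+1.
Proof. by rewrite /kuhn_vertex; have := ltn_ord (x i); case: (_ < l); lia. Qed.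

Lemma kuhn_vertex_adjacent x s l l' : adjacent (kuhn_vertex x s l) (kuhn_vertex x s l').
Proof. by move=> i; rewrite /kuhn_vertex; case: (_ < l); case: (_ < l'); lia. Qed.

Definition raise (x : base) a : base :=
  [ffun i => if i == a then inord (x i).+1 else x i].
Definition lower (x : base) a : base :=
  [ffun i => if i == a then inord (x i).-1 else x i].
Definition shift : {perm 'I_n} := perm (@ord_pred_inj n).
Definition swap_adj (j : 'I_n.+1) : {perm 'I_n} := tperm (inord j.-1) (inord j).

Lemma shiftE a : shift a = ord_pred a. Proof. exact: permE. Qed.

Lemma shiftVE a : (shift^-1)%g a = ordS a.
Proof. by rewrite -{1}(ordSK a) -shiftE permK. Qed.

Lemma kuhn_vertex_swap x s (j l : 'I_n.+1) : j != ord0 -> j != ord_max -> l != j ->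
  kuhn_vertex x (swap_adj j * s)%g l = kuhn_vertex x s l.
Proof.
move=> j0 jmax lj; apply: functional_extensionality => i; rewrite /kuhn_vertex.
congr (_ + _); rewrite invgM permM /swap_adj tpermV.
have jn := ltn_ord j; have j0' : (j : nat) != 0 by []; have jn' : (j : nat) != n by [].
have lj' : (l : nat) != j by [].
by case: tpermP => [->|->|_ _] //; rewrite !inordK; lia.
Qed.

Lemma kuhn_vertex_raise (x : base) (s : {perm 'I_n}) l : x (s ord0) < m -> l < n ->
  kuhn_vertex (raise x (s ord0)) (shift^-1 * s)%g l = kuhn_vertex x s l.+1.
Proof.
move=> xs ln; apply: functional_extensionality => i; rewrite /kuhn_vertex ffunE.
rewrite invgM invgK permM shiftE ord_predE.
have [->|ne] := eqVneq i (s ord0); first by rewrite permK /= inordK; lia.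
have : (s^-1)%g i != 0 :> nat.
  by apply: contra_neq ne => /(@ord_inj n _ ord0) <-; rewrite permKV.
by case: ((s^-1)%g i) => -[|a] //= _ _; rewrite ltnS.
Qed.

Lemma kuhn_vertex_lower (x : base) (s : {perm 'I_n}) l : 0 < x (s ord_max) -> l < n ->
  kuhn_vertex (lower x (s ord_max)) (shift * s)%g l.+1 = kuhn_vertex x s l.
Proof.
move=> xs ln; apply: functional_extensionality => i; rewrite /kuhn_vertex ffunE.
rewrite invgM permM shiftVE ordSE.
have [->|ne] := eqVneq i (s ord_max).
  by rewrite permK /= eqxx inordK; have := ltn_ord (x (s ord_max)); lia.
have : (s^-1)%g i != np :> nat.
  by apply: contra_neq ne => /(@ord_inj n _ ord_max) <-; rewrite permKV.
by move=> /negbTE ->; rewrite ltnS.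
Qed.

Local Notation simplex := (base * {perm 'I_n})%type.
Local Notation facet := (simplex * 'I_n.+1)%type.

(* Replaces vertex [j] by its reflection through the opposite facet, which stays
   shared; facets on the boundary of the cube are fixed. *)
Definition pivot (t : facet) : facet :=
  let: (x, s, j) := t in
  if j == ord0 then
    if x (s ord0) < m then (raise x (s ord0), (shift^-1 * s)%g, ord_max) else t
  else if j == ord_max then
    if 0 < x (s ord_max) then (lower x (s ord_max), (shift * s)%g, ord0) else t
  else (x, (swap_adj j * s)%g, j).

Lemma pivotK : involutive pivot.
Proof.
case=> [[x s] j]; rewrite /pivot.
case: ifP => [/eqP j0|jn0].
  case: ifP => [xs|xs]; last by rewrite j0 eqxx xs.
  have -> : (shift^-1 * s)%g ord_max = s ord0.
    by rewrite permM shiftVE; f_equal; apply: ord_inj; rewrite ordSE eqxx.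
  rewrite (_ : ord_max == ord0 = false) // eqxx ffunE eqxx inordK; last by lia.
  rewrite /= mulKVg j0; congr (_, _, _); apply/ffunP => i; rewrite !ffunE.
  by case: eqP => [->|_]; apply: val_inj; rewrite /= ?ffunE ?eqxx ?inordK //; lia.
case: ifP => [/eqP jm|jnm].
  case: ifP => [xs|xs]; last by rewrite jn0 jm eqxx xs.
  have -> : (shift * s)%g ord0 = s ord_max.
    by rewrite permM shiftE; f_equal; apply: ord_inj; rewrite ord_predE.
  have xm := ltn_ord (x (s ord_max)).
  rewrite eqxx ffunE eqxx inordK; last by lia.
  have -> : (x (s ord_max)).-1 < m by lia.
  rewrite mulKg jm; congr (_, _, _); apply/ffunP => i; rewrite !ffunE.
  by case: eqP => [->|_]; apply: val_inj; rewrite /= ?ffunE ?eqxx ?inordK //; lia.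
by rewrite jn0 jnm mulgA /swap_adj tperm2 mul1g.
Qed.

Variable lab : ('I_n -> nat) -> nat.
Hypothesis lab_le : forall v, lab v <= n.
Hypothesis lab_top : forall v (i : 'I_n),
  (forall j, v j <= m.+1) -> v i = m.+1 -> lab v != i.+1.
Hypothesis lab_last_zero : forall v c,
  (forall j, v j <= m.+1) -> last_zero v c -> lab v = c.+1.

Definition simplex_labels (p : simplex) (j : 'I_n.+1) := lab (kuhn_vertex p.1 p.2 j).
Definition door (t : facet) : bool := facet_complete (simplex_labels t.1) t.2.

Lemma pivot_door t : door t -> door (pivot t).
Proof.
case: t => [[x s] j]; rewrite /door /simplex_labels /= => /forallP dj.
rewrite /pivot; case: ifP => [/eqP j0|jn0].
  case: ifP => [xs|_]; last by apply/forallP.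
  apply/forallP => c; have /existsP[j' /andP[nj' /eqP lj']] := dj c.
  rewrite /= j0 in nj'.
  have j'0 : 0 < j' by case: j' nj' {lj'} => [[|a] ?].
  have jn := ltn_ord j'.
  apply/existsP; exists (inord j'.-1); apply/andP; split.
    by apply/eqP => /(congr1 val); rewrite /= inordK; lia.
  by rewrite /simplex_labels /= inordK ?kuhn_vertex_raise ?prednK ?lj' //; lia.
case: ifP => [/eqP jm|jnm].
  case: ifP => [xs|_]; last by apply/forallP.
  apply/forallP => c; have /existsP[j' /andP[nj' /eqP lj']] := dj c.
  have j'n : j' < n.
    have := ltn_ord j'; move: nj'; rewrite /= jm.
    by have -> : (j' != ord_max) = (j' != n :> nat) by []; lia.
  apply/existsP; exists (inord j'.+1); apply/andP; split.
    by apply/eqP => /(congr1 val); rewrite /= inordK; lia.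
  by rewrite /simplex_labels /= inordK ?kuhn_vertex_lower ?lj' //; lia.
apply/forallP => c; have /existsP[j' /andP[nj' /eqP lj']] := dj c.
apply/existsP; exists j'.
by rewrite /= nj' /simplex_labels /= kuhn_vertex_swap ?jn0 ?jnm ?lj'.
Qed.

Definition rev_perm : {perm 'I_n} := perm (@rev_ord_inj n).

Lemma rev_permE c : rev_perm c = rev_ord c. Proof. exact: permE. Qed.

Lemma rev_permV c : (rev_perm^-1)%g c = rev_ord c.
Proof. by rewrite -{1}(rev_ordK c) -rev_permE permK. Qed.

Definition start : facet := ([ffun => ord0], rev_perm, ord_max).

Lemma pivot_start : pivot start = start.
Proof. by rewrite /pivot /start (_ : ord_max == ord0 = false) // eqxx ffunE. Qed.

Lemma door_start : door start.
Proof.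
apply/forallP => c; apply/existsP; exists (inord (np - c)).
have cn := ltn_ord c.
apply/andP; split; first by apply/eqP => /(congr1 val); rewrite /= inordK; lia.
apply/eqP/lab_last_zero; first exact: kuhn_vertex_le.
split=> [|i ci]; rewrite /kuhn_vertex ffunE rev_permV /= inordK; try lia.
by rewrite add0n; have := ltn_ord i; case: ltnP => //; lia.
Qed.

Lemma door_ord0 x s : door (x, s, ord0) -> x (s ord0) < m.
Proof.
move=> /forallP dj; rewrite ltnNge; apply/negP => xm_ge.
have xm : x (s ord0) = m :> nat by have := ltn_ord (x (s ord0)); lia.
have /existsP[j /andP[nj0 /eqP lj]] := dj (s ord0).
have j0 : 0 < j by case: j nj0 {lj} => -[].
have := lab_top (kuhn_vertex_le x s j) (i := s ord0).
by rewrite -lj /simplex_labels eqxx /kuhn_vertex permK xm j0 addn1 => /(_ erefl).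
Qed.

Lemma swap_adj_neq1 j : j != ord0 -> j != ord_max -> swap_adj j != 1%g.
Proof.
move=> j0 jm; apply/eqP => /(congr1 (fun p : {perm 'I_n} => val (p (inord j.-1)))).
have jn := ltn_ord j; have j0' : (j : nat) != 0 by []; have jm' : (j : nat) != n by [].
by rewrite /= perm1 tpermL !inordK; lia.
Qed.

Lemma door_last_zero x s : door (x, s, ord_max) -> x (s ord_max) = 0 :> nat ->
  forall c, exists l : 'I_n.+1, last_zero (kuhn_vertex x s l) c.
Proof.
move=> /forallP dj x0 c; have /existsP[l /andP[lm /eqP lc]] := dj c.
have ln : l < n.
  have := ltn_ord l; move: lm; rewrite /=.
  by have -> : (l != ord_max) = (l != n :> nat) by []; lia.
have [z zl] : exists z, last_zero (kuhn_vertex x s l) z.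
  by apply: (@last_zero_exists _ _ (s ord_max)); rewrite /kuhn_vertex permK x0 /= ltnNge -ltnS ln.
exists l; suff -> : c = z by [].
move: lc; rewrite /simplex_labels (lab_last_zero (kuhn_vertex_le x s l) zl).
by move=> [/ord_inj].
Qed.

Lemma door_ord_max x s : door (x, s, ord_max) -> x (s ord_max) = 0 :> nat ->
  (x, s) = ([ffun => ord0], rev_perm).
Proof.
move=> dj x0; have zeros := door_last_zero dj x0.
have x_eq0 c : x c = 0 :> nat.
  by have [l [+ _]] := zeros c; rewrite /kuhn_vertex; lia.
have sV_decr (c i : 'I_n) : c < i -> (s^-1)%g i < (s^-1)%g c.
  move=> ci; have [l [zc /(_ i ci)]] := zeros c.
  by move: zc; rewrite /kuhn_vertex !x_eq0 !add0n; do 2 case: ltnP => //; lia.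
have sV := decreasing_ordE sV_decr.
congr (_, _); first by apply/ffunP => i; rewrite ffunE; apply: ord_inj; rewrite x_eq0.
apply/permP => c; apply: (@perm_inj _ (s^-1)%g).
by rewrite permK sV rev_permE rev_ordK.
Qed.

Lemma pivot_fixed t : door t -> pivot t = t -> t = start.
Proof.
case: t => [[x s] j] dj; rewrite /pivot.
case: ifP => [/eqP j0|jn0].
  by subst j; rewrite door_ord0 // => -[_ _ /(congr1 val)].
case: ifP => [/eqP jm|jnm]; last first.
  case=> /(canRL (mulgK s)); rewrite mulgV => /eqP.
  by rewrite (negbTE (swap_adj_neq1 (negbT jn0) (negbT jnm))).
subst j; case: ifP => [_ /(congr1 (fun t : facet => val t.2)) //|xs _].
by rewrite /start -(door_ord_max dj); last by lia.
Qed.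

Theorem kuhn_sperner : exists p : simplex, complete_labelling (simplex_labels p).
Proof.
set D := [set t : facet | door t].
have oddD : odd #|D|.
  rewrite (@odd_card_involution _ pivot D); first last.
  - by move=> t _; exact: pivotK.
  - by move=> t; rewrite !inE; exact: pivot_door.
  suff -> : [set t in D | pivot t == t] = [set start] by rewrite cards1.
  apply/setP => t; rewrite !inE; apply/idP/idP => [/andP[dt /eqP ft]|/eqP ->].
    by rewrite (pivot_fixed dt ft).
  by rewrite door_start pivot_start eqxx.
have cardD : #|D| = \sum_(p : simplex) #|[set j | door (p, j)]|.
  rewrite /D card_set_sum (eq_bigr _ (fun p _ => card_set_sum (fun j => door (p, j)))).
  by rewrite pair_big /=; apply: eq_big => // -[].
move: oddD; rewrite cardD odd_sum_odd /door.
under eq_bigr => p _ do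
  rewrite (@odd_card_facet_complete _ (simplex_labels p) (fun j => lab_le _)).
rewrite -card_set_sum => /odd_gt0; rewrite card_gt0 => /set0Pn[p].
by rewrite inE; exists p.
Qed.
End KuhnTriangulation.

Section CoverLabelling.
Variables (k np C : nat).
Local Notation n := np.+1.
Variables (V : 'I_n -> setfam n) (col : point n -> 'I_n) (cell : point n -> point n -> Prop).
Hypothesis k_gt0 : 0 < k.
Hypothesis V_bounded : forall i A, V i A -> forall x y, A x -> A y -> supdist x y <= C.
Hypothesis V_disjoint : forall i, r_disjoint (2 * k) (V i).
Hypothesis cellP : forall x, lattice k x -> V (col x) (cell x) /\ cell x x.

Definition grid_point (u : 'I_n -> nat) : point n := fun i => Posz (k * u i).

Lemma grid_point_lattice u : lattice k (grid_point u).
Proof. by move=> i; apply/dvdzP; exists (Posz (u i)); rewrite -PoszM mulnC. Qed.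

Lemma supdist_grid_adjacent u w :
  adjacent u w -> supdist (grid_point u) (grid_point w) <= k.
Proof. by move=> uw; apply/bigmax_leqP => j _; have [] := uw j; rewrite /grid_point; nia. Qed.

Lemma supdist_grid_ge u w j : k * (u j - w j) <= supdist (grid_point u) (grid_point w).
Proof. by apply: leq_trans (leq_bigmax j); rewrite /grid_point; nia. Qed.

Definition color (u : 'I_n -> nat) : 'I_n :=
  if [exists j, u j == 0] then inord (\max_(j < n | u j == 0) j) else col (grid_point u).

Lemma color_last_zero u c : last_zero u c -> color u = c.
Proof.
move=> uc; rewrite /color (last_zero_bigmax uc) inord_val.
by case: ifP => // /existsPn/(_ c); rewrite uc.1 eqxx.
Qed.

Lemma color_cell u : u (color u) != 0 -> V (color u) (cell (grid_point u)).
Proof.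
case: (boolP [exists j, u j == 0]) => [/existsP[j /eqP /last_zero_exists[c uc]]|nz].
  by rewrite (color_last_zero uc) uc.1.
by rewrite /color (negbTE nz) => _; exact: (cellP (grid_point_lattice u)).1.
Qed.

Lemma cell_adjacent u w : adjacent u w -> color u = color w ->
  u (color u) != 0 -> w (color w) != 0 -> cell (grid_point u) = cell (grid_point w).
Proof.
move=> uw cuw u0 w0; apply: NNPP => ne.
have Vw : V (color u) (cell (grid_point w)) by rewrite cuw; exact: color_cell.
have := V_disjoint (color_cell u0) Vw ne (cellP (grid_point_lattice u)).2
  (cellP (grid_point_lattice w)).2.
by have := supdist_grid_adjacent uw; lia.
Qed.

Inductive linked (i : 'I_n) : ('I_n -> nat) -> Prop :=
| linked_base u : u i = 0 -> color u = i -> linked i u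
| linked_step u w : linked i w -> adjacent u w -> color u = i -> linked i u.

Lemma linked_color i u : linked i u -> color u = i.
Proof. by case. Qed.

Lemma linked_cell i u : linked i u ->
  u i = 0 \/ exists s, s i = 1 /\ cell (grid_point u) (grid_point s).
Proof.
elim=> [{}u ui _|{}u w lw IH uw cu]; first by left.
have [|ui] := eqVneq (u i) 0; [by left | right].
have [wi|wi] := eqVneq (w i) 0.
  exists u; split; last exact: (cellP (grid_point_lattice u)).2.
  by have := uw i; rewrite wi; lia.
case: IH => [/eqP|[s [si ws]]]; first by rewrite (negbTE wi).
exists s; split=> //; rewrite (cell_adjacent uw) ?cu ?(linked_color lw) //.
Qed.

Lemma linked_le i u : linked i u -> u i <= C.+1.
Proof.
move=> lu; have cu := linked_color lu.
case: (linked_cell lu) => [-> //|[s [si us]]].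
have [-> //|u0] := eqVneq (u i) 0.
have Vu : V i (cell (grid_point u)) by rewrite -cu; apply: color_cell; rewrite cu.
have := V_bounded Vu (cellP (grid_point_lattice u)).2 us.
by have := supdist_grid_ge u s i; rewrite si; nia.
Qed.

Definition label (u : 'I_n -> nat) : nat :=
  if excluded_middle_informative (linked (color u) u) then (color u).+1 else 0.

Lemma label_le u : label u <= n.
Proof. by rewrite /label; case: excluded_middle_informative => lu /=. Qed.

Lemma label_eq0 u : label u = 0 -> ~ linked (color u) u.
Proof. by rewrite /label; case: excluded_middle_informative. Qed.

Lemma label_eqS u (c : 'I_n) : label u = c.+1 -> linked c u.
Proof.
by rewrite /label; case: excluded_middle_informative => lu //= [/ord_inj cu]; rewrite -cu.
Qed.

Lemma label_top u i : u i = C.+2 -> label u != i.+1.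
Proof. by move=> ui; apply/negP => /eqP /label_eqS /linked_le; rewrite ui ltnn. Qed.

Lemma label_last_zero u c : last_zero u c -> label u = c.+1.
Proof.
move=> uc; rewrite /label (color_last_zero uc).
case: excluded_middle_informative => // [[]].
exact: linked_base uc.1 (color_last_zero uc).
Qed.

Lemma cover_labelling_false : False.
Proof.
have [[x s] /forallP full] := @kuhn_sperner np C.+1 label label_le
  (fun u i _ => @label_top u i) (fun u c _ => @label_last_zero u c).
have /existsP[j0 /eqP /label_eq0 nl0] := full ord0.
have /existsP[j1 /eqP l1] := full (inord (color (kuhn_vertex x s j0)).+1).
apply/nl0/(linked_step (w := kuhn_vertex x s j1)) => //; last exact: kuhn_vertex_adjacent.
apply: label_eqS; move: l1; rewrite /simplex_labels /= inordK //.
by have := ltn_ord (color (kuhn_vertex x s j0)); lia.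
Qed.
End CoverLabelling.

Lemma unif_bounded_common n m (V : 'I_m -> setfam n) : (forall i, unif_bounded (V i)) ->
  exists C, forall i A, V i A -> forall x y, A x -> A y -> supdist x y <= C.
Proof.
move=> /fin_all_exists[C VC]; exists (\max_i C i) => i A VA x y Ax Ay.
exact: leq_trans (VC i A VA x y Ax Ay) (leq_bigmax i).
Qed.

Lemma cover_choice n m k (V : 'I_m.+1 -> setfam n) :
  (forall x, lattice k x -> exists i A, V i A /\ A x) ->
  exists (col : point n -> 'I_m.+1) (cell : point n -> point n -> Prop),
    forall x, lattice k x -> V (col x) (cell x) /\ cell x x.
Proof.
move=> cover.
have pick x : {p : 'I_m.+1 * (point n -> Prop) | lattice k x -> V p.1 p.2 /\ p.2 x}.
  apply: constructive_indefinite_description.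
  have [/cover[i [A VA]]|nL] := classic (lattice k x); first by exists (i, A).
  by exists (ord0, fun _ => True).
by exists (fun x => (sval (pick x)).1), (fun x => (sval (pick x)).2) => x; case: pick.
Qed.

Theorem lemma3 (k n : nat) (hk : 0 < k) (hn : 0 < n) :
  ~ exists V : 'I_n -> setfam n,
      (forall i A, V i A -> forall x, A x -> lattice k x) /\
      (forall i, unif_bounded (V i)) /\
      (forall i, r_disjoint (2 * k) (V i)) /\
      (forall x, lattice k x -> exists i A, V i A /\ A x).
Proof.
(* The cover is only queried at lattice points. *)
case: n hn => // np _ [V [_ [/unif_bounded_common[C VC] [Vdisj]]]].
move=> /cover_choice[col [cell cellP]].
exact: (cover_labelling_false hk VC Vdisj cellP).
Qed.
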